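(* If an analytic function $f(z)=\sum_{n\ge0}f_nz^n$ on $\mathbb{D}$ satisfies $\sup_{n\ge0}|f_n|e^{c\sqrt n}<\infty$ for some $c>0$, then there exists $c'>0$ such that, with $G(t)=\exp(-c'/t)$ and $M_n=\int_{\mathbb{D}}G(1-|z|)|z|^{2n}\,dA(z)$, one has $\sum_{n\ge0}|f_n|^2/M_n<\infty$, i.e. $f\in H_2^*(M)$ for $M=\{M_n\}_{n\ge0}$.
   Context: $\mathbb{D}$ is the unit disk and $dA$ area measure normalized so that $A(\mathbb{D})=1$. $H_2^*(M)$ denotes the space of power series $\sum f_nz^n$ with $\sum_n|f_n|^2/M_n<\infty$. *)

From HB Require Import structures.
From mathcomp Require Import all_boot all_order all_algebra.
From mathcomp Require Import all_classical all_reals all_analysis.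
From mathcomp Require Import complex.
Set Implicit Arguments. Unset Strict Implicit. Unset Printing Implicit Defensive.
Import Order.TTheory GRing.Theory Num.Theory.
Import numFieldNormedType.Exports.
Local Open Scope classical_set_scope.
Local Open Scope ring_scope.

Definition cmod (R : realType) (z : R[i]) : R := ComplexField.Normc.normc z.

(* Points of the plane R^2 = C, z = x + i y represented as (x, y). *)
Definition pmod (R : realType) (z : R * R) : R := Num.sqrt (z.1 ^+ 2 + z.2 ^+ 2).

Definition unit_disk (R : realType) : set (R * R) := [set z | pmod z < 1].

(* Normalized area measure dA = (1/pi) dx dy, so A(D) = 1. Integral over D
   of a nonnegative real function g with respect to dA. *)
Definition dA_integral_disk (R : realType) (g : R * R -> R) : \bar R :=
  ((pi : R)^-1)%:E *
  (\int[(@lebesgue_measure R) \x (@lebesgue_measure R)]_(z in @unit_disk R) (g z)%:E)%E.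

Definition Gfun (R : realType) (c' : R) (t : R) : R := expR (- (c' / t)).

(* M_n = \int_D G(1 - |z|) |z|^{2n} dA(z)  (a real number; the integral is finite) *)
Definition Mseq (R : realType) (c' : R) (n : nat) : R :=
  fine (dA_integral_disk (fun z => Gfun c' (1 - pmod z) * pmod z ^+ (2 * n))).

Definition in_H2star (R : realType) (M : nat -> R) (f : nat -> R[i]) : Prop :=
  (\sum_(0 <= n <oo) ((cmod (f n)) ^+ 2 / M n)%:E < +oo)%E.

From HB Require Import structures.
From mathcomp Require Import all_boot all_order all_algebra.
From mathcomp Require Import all_classical all_reals all_analysis.
From mathcomp Require Import complex.
From mathcomp Require Import ring lra measurable_realfun.
Set Implicit Arguments. Unset Strict Implicit. Unset Printing Implicit Defensive.
Import Order.TTheory GRing.Theory Num.Theory.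
Import numFieldNormedType.Exports.
Local Open Scope ring_scope.

(* On a square of side d/2 inside the disk where 1 - 2d <= |z| <= 1 - d, the
   weight G(1 - |z|) |z|^(2n) is at least exp(-c'/d) (1 - 2d)^(2n), so
   M_n >= (d^2 / 4 pi) exp(-c'/d) (1 - 2d)^(2n).  With d = t / (sqrt n + 1) and
   c' = t c / 4, where 32 t <= c, both factors are at least exp(-c sqrt n / 4)
   up to constants, so M_n >= K exp(-c sqrt n / 2) / (sqrt n + 1)^2.  Since
   |f_n|^2 <= B^2 exp(-2 c sqrt n), the terms |f_n|^2 / M_n are bounded by a
   constant times (sqrt n + 1)^2 exp(-3 c sqrt n / 2), which is O(1/n^2). *)

Section disk_integrals.
Variable R : realType.
Local Open Scope classical_set_scope.
Local Notation mu := ((@lebesgue_measure R) \x (@lebesgue_measure R))%E.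
Local Notation disk := (@unit_disk R).

Lemma pmod_ge0 (z : R * R) : 0 <= pmod z.
Proof. exact: sqrtr_ge0. Qed.

Lemma measurable_pmod : measurable_fun [set: R * R] (@pmod R).
Proof.
apply: measurableT_comp (fun z : R * R => z.1 ^+ 2 + z.2 ^+ 2) _ _.
  exact: continuous_measurable_fun (@sqrt_continuous R).
by apply: measurable_funD; apply: measurable_funX; [exact: measurable_fst | exact: measurable_snd].
Qed.

Lemma measurable_unit_disk : measurable disk.
Proof.
rewrite (_ : disk = [set: R * R] `&` (@pmod R) @^-1` `]-oo, 1[).
  exact: measurable_pmod measurableT _ (measurable_itv _).
by apply/seteqP; split => z /=; rewrite in_itv /=; [move=> ?; split | case].
Qed.

Lemma unit_disk_sub_square : disk `<=` `[-1, 1] `*` `[-1, 1].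
Proof.
move=> z; rewrite /unit_disk /pmod /= => hz.
have {}hz : z.1 ^+ 2 + z.2 ^+ 2 < 1 by rewrite -ltr_sqrt ?sqrtr1.
by rewrite !in_itv /=; split; apply/andP; split; nra.
Qed.

Lemma lebesgue_measure_itvcc (a b : R) : a <= b ->
  lebesgue_measure `[a, b] = (b - a)%:E.
Proof.
rewrite lebesgue_measure_itv /= lte_fin le_eqVlt => /predU1P[->|->] //.
by rewrite ltxx subrr.
Qed.

Lemma product_measure_itvcc (a b c d : R) : a <= b -> c <= d ->
  mu (`[a, b] `*` `[c, d]) = ((b - a) * (d - c))%:E.
Proof.
move=> ab cd; rewrite product_measure1E; try exact: measurable_itv.
by rewrite /= !lebesgue_measure_itvcc.
Qed.

Lemma dA_integral_disk_fin_num (g : R * R -> R) :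
  measurable_fun disk (fun z => (g z)%:E) ->
  (forall z, disk z -> 0 <= g z <= 1) ->
  dA_integral_disk g \is a fin_num.
Proof.
move=> mg g01; rewrite fin_numM // ge0_fin_numE; last first.
  by apply: integral_ge0 => z /g01 /andP[]; rewrite lee_fin.
apply: (@le_lt_trans _ _ (\int[mu]_(z in disk) (cst 1%:E) z)%E).
  apply: ge0_le_integral => //; first exact: measurable_unit_disk.
  - by move=> z /g01 /andP[]; rewrite lee_fin.
  - by move=> z /g01 /andP[_]; rewrite lee_fin.
rewrite integral_cst ?mul1e; last exact: measurable_unit_disk.
apply: (@le_lt_trans _ _ (mu (`[-1, 1] `*` `[-1, 1]))); last first.
  by rewrite product_measure_itvcc ?ltry // lerN10.
apply: le_measure; rewrite ?inE; first exact: measurable_unit_disk.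
  by apply: measurableX; exact: measurable_itv.
exact: unit_disk_sub_square.
Qed.

Lemma dA_integral_disk_ge (g : R * R -> R) (S : set (R * R)) (K : R) :
  measurable S -> S `<=` disk ->
  measurable_fun disk (fun z => (g z)%:E) ->
  (forall z, disk z -> 0 <= g z) -> 0 <= K -> (forall z, S z -> K <= g z) ->
  ((pi^-1 * K)%:E * mu S <= dA_integral_disk g)%E.
Proof.
move=> mS Sdisk mg g0 K0 Kg; rewrite EFinM -muleA lee_wpmul2l //.
  by rewrite lee_fin invr_ge0 pi_ge0.
rewrite -integral_cst //.
apply: (@le_trans _ _ (\int[mu]_(z in S) (g z)%:E)%E).
  apply: ge0_le_integral => //.
  exact: measurable_funS measurable_unit_disk Sdisk mg.
apply: ge0_subset_integral => //; exact: measurable_unit_disk.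
Qed.

Definition Mweight (c' : R) (n : nat) (z : R * R) : R :=
  Gfun c' (1 - pmod z) * pmod z ^+ (2 * n).

Lemma measurable_Gfun (c' : R) : measurable_fun (`]0, +oo[ : set R) (Gfun c').
Proof.
apply: open_continuous_measurable_fun; first exact: interval_open.
move=> x; rewrite inE /= in_itv /= andbT => x0.
have cx : {for x, continuous (fun t : R => - (c' / t))}.
  apply: continuousN; apply: continuousM; first exact: cst_continuous.
  by apply: inv_continuous; rewrite gt_eqF.
by rewrite /Gfun; apply: (continuous_comp cx); exact: continuous_expR.
Qed.

Lemma measurable_Mweight c' n : measurable_fun disk (fun z => (Mweight c' n z)%:E).
Proof.
have mpmod := measurable_funS measurableT (subsetT disk) measurable_pmod.
apply/measurable_EFinP; apply: measurable_funM; last exact: measurable_funX.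
apply: (measurable_comp (F := `]0, +oo[ : set R) (f := Gfun c')
  (g := fun z => 1 - pmod z)) (measurable_Gfun c') _ => //.
  by move=> _ [z hz <-]; rewrite /= in_itv /= andbT subr_gt0.
exact: measurable_funB.
Qed.

Lemma Mweight_ge0 c' n z : 0 <= Mweight c' n z.
Proof. by rewrite mulr_ge0 ?expR_ge0 ?exprn_ge0 ?pmod_ge0. Qed.

Lemma Mweight_le1 c' n z : 0 <= c' -> disk z -> Mweight c' n z <= 1.
Proof.
rewrite /unit_disk /= => c'0 hz.
rewrite mulr_ile1 ?expR_ge0 ?exprn_ge0 ?exprn_ile1 ?pmod_ge0 ?(ltW hz) //.
by rewrite /Gfun -[X in _ <= X]expR0 ler_expR oppr_le0 divr_ge0 // subr_ge0 ltW.
Qed.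

Lemma Mweight_ge c' n d a z : 0 <= c' -> 0 < d -> 0 <= a <= pmod z ->
  pmod z <= 1 - d -> expR (- (c' / d)) * a ^+ (2 * n) <= Mweight c' n z.
Proof.
move=> c'0 d0 /andP[a0 az] zd.
rewrite ler_pM ?expR_ge0 ?exprn_ge0 ?lerXn2r ?nnegrE ?pmod_ge0 //.
by rewrite ler_expR lerN2 ler_wpM2l // lef_pV2 ?posrE //; lra.
Qed.

Definition corner_square (d : R) : set (R * R) :=
  `[1 - 2 * d, 1 - 3 / 2 * d] `*` `[0, d / 2].

Lemma measurable_corner_square d : measurable (corner_square d).
Proof. by apply: measurableX; exact: measurable_itv. Qed.

Lemma corner_square_measure d : 0 <= d -> mu (corner_square d) = ((d / 2) ^+ 2)%:E.
Proof. by move=> d0; rewrite product_measure_itvcc; [congr EFin; field | lra | lra]. Qed.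

Lemma pmod_corner_square d z : 0 < d <= 1 / 2 -> corner_square d z ->
  1 - 2 * d <= pmod z <= 1 - d.
Proof.
move=> /andP[d0 d1]; rewrite /corner_square /= !in_itv /= => -[/andP[x1 x2] /andP[y1 y2]].
have p2 : pmod z ^+ 2 = z.1 ^+ 2 + z.2 ^+ 2 by rewrite sqr_sqrtr // addr_ge0 // sqr_ge0.
have p0 := pmod_ge0 z; apply/andP; split; nra.
Qed.

Lemma corner_square_sub_disk d : 0 < d <= 1 / 2 -> corner_square d `<=` disk.
Proof.
move=> hd z /(pmod_corner_square hd) /andP[_ zd]; move: hd => /andP[d0 _].
rewrite /unit_disk /=; lra.
Qed.

Lemma Mseq_ge (c' d : R) (n : nat) : 0 <= c' -> 0 < d <= 1 / 2 ->
  pi^-1 * (d / 2) ^+ 2 * (expR (- (c' / d)) * (1 - 2 * d) ^+ (2 * n)) <= Mseq c' n.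
Proof.
move=> c'0 hd; have /andP[d0 d1] := hd.
have I_fin : dA_integral_disk (Mweight c' n) \is a fin_num.
  apply: dA_integral_disk_fin_num; first exact: measurable_Mweight.
  by move=> z hz; rewrite Mweight_ge0 Mweight_le1.
rewrite -lee_fin -[Mseq c' n]/(fine (dA_integral_disk (Mweight c' n))) fineK //.
rewrite mulrAC EFinM -corner_square_measure; last exact: ltW.
apply: dA_integral_disk_ge.
- exact: measurable_corner_square.
- exact: corner_square_sub_disk.
- exact: measurable_Mweight.
- by move=> z _; exact: Mweight_ge0.
- by rewrite mulr_ge0 ?expR_ge0 ?exprn_ge0 //; lra.
- move=> z /(pmod_corner_square hd) /andP[z1 z2]; apply: Mweight_ge => //.
  by rewrite z1 andbT; lra.
Qed.

Lemma Mseq_gt0 (c' : R) (n : nat) : 0 <= c' -> 0 < Mseq c' n.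
Proof.
move=> c'0; apply: lt_le_trans (Mseq_ge n c'0 (_ : 0 < 1 / 4 <= 1 / 2)); last lra.
by rewrite !mulr_gt0 ?invr_gt0 ?pi_gt0 ?expR_gt0 ?exprn_gt0 //; lra.
Qed.

End disk_integrals.

Section sqrt_estimates.
Variable R : realType.

Lemma expR_le1Bx (x : R) : 0 <= x <= 1 / 2 -> expR (- (2 * x)) <= 1 - x.
Proof.
move=> /andP[x0 x1]; have e1 := expR_ge1Dx (2 * x); have e0 := expR_gt0 (2 * x).
rewrite expRN -[_^-1]mul1r ler_pdivrMr //; nra.
Qed.

Lemma ler1Dx_expR (a x : R) : 0 < a -> 0 <= x -> 1 + x <= (1 + a^-1) * expR (a * x).
Proof.
move=> a0 x0; have e1 := expR_ge1Dx (a * x).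
have ax0 : 0 <= a * x by rewrite mulr_ge0 // ltW.
have ax := mulKf (lt0r_neq0 a0) x; have a'0 : 0 < a^-1 by rewrite invr_gt0.
set e := expR _ in e1 *; nra.
Qed.

Lemma Mseq_ge_expR_sqrt (c t : R) (n : nat) : 0 < c -> 0 < t <= 1 / 4 -> 32 * t <= c ->
  pi^-1 * (t / 2) ^+ 2 * expR (- (c / 4)) * expR (- (c / 2 * Num.sqrt n%:R))
    / (Num.sqrt n%:R + 1) ^+ 2 <= Mseq (t * c / 4) n.
Proof.
move=> c0 /andP[t0 t1] tc; set u := Num.sqrt n%:R.
have u0 : 0 <= u := sqrtr_ge0 _.
have u2 : u ^+ 2 = n%:R by rewrite sqr_sqrtr.
pose d := t / (u + 1).
have d0 : 0 < d by rewrite divr_gt0 //; lra.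
have du : d * (u + 1) = t by rewrite divfK //; lra.
have dt : d <= t by nra.
have dn : 8 * d * n%:R <= c / 4 * u by rewrite -u2; nra.
have hpow : expR (- (c / 4 * u)) <= (1 - 2 * d) ^+ (2 * n).
  have h2d : expR (- (2 * (2 * d))) <= 1 - 2 * d.
    by apply: expR_le1Bx; apply/andP; split; lra.
  apply: le_trans (lerXn2r (2 * n) _ _ h2d); rewrite ?nnegrE ?expR_ge0 //; last lra.
  by rewrite -expRM_natl ler_expR natrM; nra.
have c'0 : 0 <= t * c / 4 by rewrite divr_ge0 ?mulr_ge0 //; lra.
have hd : 0 < d <= 1 / 2 by rewrite d0 /=; lra.
apply: le_trans (Mseq_ge n c'0 hd).
have u1 : u + 1 != 0 by rewrite gt_eqF //; lra.
(* [field] would unfold [pi], so abstract it first. *)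
move: (@pi_gt0 R); move: (pi : R) => p p_gt0; have p0 := lt0r_neq0 p_gt0.
set E := expR (- (c / 4 * u)).
have -> : expR (- (t * c / 4 / d)) = expR (- (c / 4)) * E.
  by rewrite -expRD; congr expR; rewrite /d; field; rewrite u1 (gt_eqF t0).
have -> : expR (- (c / 2 * u)) = E * E by rewrite -expRD; congr expR; field.
set K := p^-1 * (t / 2) ^+ 2 / (u + 1) ^+ 2 * expR (- (c / 4)) * E.
have -> : p^-1 * (t / 2) ^+ 2 * expR (- (c / 4)) * (E * E) / (u + 1) ^+ 2 = K * E.
  by rewrite /K; field; rewrite u1 p0.
have -> : p^-1 * (d / 2) ^+ 2 * (expR (- (c / 4)) * E * (1 - 2 * d) ^+ (2 * n))
    = K * (1 - 2 * d) ^+ (2 * n).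
  by rewrite /K /d; field; rewrite u1 p0.
by rewrite ler_wpM2l // /K !mulr_ge0 ?invr_ge0 ?(ltW p_gt0) ?expR_ge0 ?exprn_ge0 //; lra.
Qed.

Lemma sqrt_poly_expR_le (c : R) (n : nat) : 0 < c ->
  n.+1%:R * n.+2%:R * (Num.sqrt n%:R + 1) ^+ 2 * expR (- (3 / 2 * c * Num.sqrt n%:R))
    <= 2 * (1 + 4 / c) ^+ 6.
Proof.
move=> c0; set u := Num.sqrt n%:R; set L := 1 + 4 / c.
have u0 : 0 <= u := sqrtr_ge0 _.
have u2 : u ^+ 2 = n%:R by rewrite sqr_sqrtr.
have L0 : 0 <= L by rewrite addr_ge0 ?divr_ge0 ?ltW.
have hD : n.+1%:R * n.+2%:R <= 2 * (u + 1) ^+ 4 :> R.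
  by rewrite -addn1 -addn2 !natrD -u2; nra.
have hL : u + 1 <= L * expR (c / 4 * u).
  by rewrite addrC /L -[4 / c]invf_div; apply: ler1Dx_expR; rewrite ?divr_gt0.
have h6 : (u + 1) ^+ 6 * expR (- (3 / 2 * c * u)) <= L ^+ 6.
  rewrite expRN ler_pdivrMr ?expR_gt0 //.
  have -> : 3 / 2 * c * u = 6%:R * (c / 4 * u) by field.
  rewrite expRM_natl -exprMn; apply: lerXn2r => //; rewrite nnegrE ?mulr_ge0 ?expR_ge0 //; lra.
rewrite -mulrA; apply: le_trans (ler_wpM2r _ hD) _.
  by rewrite mulr_ge0 ?expR_ge0 ?exprn_ge0 //; lra.
by rewrite -[2 * _ * _]mulrA ler_pM2l // mulrA -exprD.
Qed.

Lemma sqr_div_Mseq_le (c t B a : R) (n : nat) :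
  0 < c -> 0 < t <= 1 / 4 -> 32 * t <= c -> 0 <= a ->
  a * expR (c * Num.sqrt n%:R) <= B ->
  a ^+ 2 / Mseq (t * c / 4) n <=
    2 * B ^+ 2 * (1 + 4 / c) ^+ 6 / (pi^-1 * (t / 2) ^+ 2 * expR (- (c / 4)))
      / (n.+1%:R * n.+2%:R).
Proof.
move=> c0 ht tc a0 aB; have hM := Mseq_ge_expR_sqrt n c0 ht tc.
set u := Num.sqrt n%:R in aB hM *; set M := Mseq _ n in hM *.
set K := pi^-1 * _ * _ in hM *; set E := expR (- (c / 2 * u)) in hM.
have u1 : 0 < u + 1 by rewrite ltr_pwDr ?sqrtr_ge0.
have K0 : 0 < K.
  by case/andP: ht => t0 _; rewrite !mulr_gt0 ?invr_gt0 ?pi_gt0 ?expR_gt0 ?exprn_gt0 ?divr_gt0.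
have E0 : 0 < E := expR_gt0 _.
have ME0 : 0 < K * E / (u + 1) ^+ 2 by apply: divr_gt0; [exact: mulr_gt0 | exact: exprn_gt0].
have aE : a <= B * E ^+ 2.
  rewrite -expRM_natl mulrN -ler_pdivrMr ?expR_gt0 // expRN invrK.
  by apply: le_trans aB; rewrite ler_wpM2l // ler_expR; lra.
have hD : (u + 1) ^+ 2 * E ^+ 3 <= 2 * (1 + 4 / c) ^+ 6 / (n.+1%:R * n.+2%:R).
  have -> : E ^+ 3 = expR (- (3 / 2 * c * u)) by rewrite -expRM_natl; congr expR; field.
  by rewrite ler_pdivlMr ?mulr_gt0 ?ltr0n // mulrC mulrA; exact: sqrt_poly_expR_le.
rewrite [leRHS](_ : _ = B ^+ 2 / K * (2 * (1 + 4 / c) ^+ 6 / (n.+1%:R * n.+2%:R)));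
  last by ring.
apply: le_trans (ler_wpM2l (divr_ge0 (sqr_ge0 B) (ltW K0)) hD).
rewrite (_ : B ^+ 2 / K * _ = (B * E ^+ 2) ^+ 2 / (K * E / (u + 1) ^+ 2)); last first.
  by field; rewrite !gt_eqF.
have M0 : 0 < M := lt_le_trans ME0 hM.
apply: ler_pM; rewrite ?sqr_ge0 ?invr_ge0 ?(ltW M0) //.
  by apply: lerXn2r; rewrite ?nnegrE // (le_trans a0 aE).
by rewrite lef_pV2 ?posrE.
Qed.

End sqrt_estimates.

Lemma nneseries_lty_le_div_natSS (R : realType) (a : nat -> R) (C : R) :
  (forall n, 0 <= a n) -> (forall n, a n <= C / (n.+1%:R * n.+2%:R)) ->
  (\sum_(0 <= n <oo) (a n)%:E < +oo)%E.
Proof.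
move=> a0 aC; have C0 : 0 <= C.
  by have := le_trans (a0 0%N) (aC 0%N); rewrite pmulr_lge0 // invr_gt0 mulr_gt0.
apply: (@le_lt_trans _ _ C%:E); last exact: ltry.
apply: lime_le; first by apply: is_cvg_nneseries => n _ _; rewrite lee_fin.
apply: nearW => N; rewrite sumEFin lee_fin.
apply: (@le_trans _ _ (\sum_(0 <= i < N) C / (i.+1%:R * i.+2%:R))); first exact: ler_sum.
rewrite -mulr_sumr (telescope_sumr_eq (fun k => - k.+1%:R^-1)) //; last first.
  by move=> k _; have k0 := ler0n R k; field; rewrite !gt_eqF //; lra.
by rewrite invr1 opprK addrC ler_piMr // lerBlDr lerDl invr_ge0.
Qed.

Theorem mainTheorem14 (R : realType) (f : nat -> R[i]) (c : R) :
  0 < c ->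
  (exists B : R, forall n : nat, cmod (f n) * expR (c * Num.sqrt (n%:R)) <= B) ->
  exists c' : R, 0 < c' /\ in_H2star (Mseq c') f.
Proof.
move=> c0 [B hB]; pose t := Num.min (1 / 4) (c / 32).
have ht : 0 < t <= 1 / 4 by rewrite lt_min ge_min lexx; lra.
have tc : 32 * t <= c by rewrite mulrC -ler_pdivlMr // ge_min lexx orbT.
have cmod_ge0 n : 0 <= cmod (f n) by case: (f n) => x y; exact: sqrtr_ge0.
have c'0 : 0 < t * c / 4 by rewrite divr_gt0 ?mulr_gt0 //; case/andP: ht.
exists (t * c / 4); split => //.
apply: nneseries_lty_le_div_natSS => n.
  by rewrite divr_ge0 ?sqr_ge0 ?ltW ?Mseq_gt0 ?ltW.
exact: sqr_div_Mseq_le n c0 ht tc (cmod_ge0 n) (hB n).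
Qed.
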